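(* Let $G$ be a group with subgroups $H,J$ such that $H\ne G$, $|J:H\cap J|=2$ and $|H:H\cap J|$ finite. Let $g\in J\setminus(H\cap J)$, $K=H\cap H^g$, $k=|H:K|$, $\lambda=|K:H\cap J|$, $L=\langle K,g\rangle$, and $\Gamma=\mathrm{Cos}(G,H,J)$. Then: (a) $\Gamma$ is a locally finite regular graph of valency $k$ and constant edge-multiplicity $\lambda$, and $\Gamma$ is connected if and only if $G=\langle H,J\rangle$; (b) the right multiplication action of $G$ on $V\cup E$ induces an arc-transitive group of automorphisms of $\Gamma$ isomorphic to $G/\mathrm{Core}_G(H\cap J)$, and the stabilisers in $G$ of the vertex $H$, the edge $J$ and the arc $(H,J,Hg)$ are $H$, $J$ and $K\cap J=H\cap J$ respectively; (c) $H\cap L=K$, $|L:K|=2$, $|L:J|=\lambda$, and $\mathrm{Cos}(G,H,L)$ is a locally finite simple graph isomorphic to $\mathrm{SimpCos}(G,H,HgH)$; (d) $\mathrm{Cos}(G,H,L)$ is isomorphic to the base graph of $\Gamma$, $\Gamma$ is a $(G,\lambda)$-extender of it, and $\Gamma$ is simple if and only if $L=J$.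
   Context: Graphs are triples $(V,E,\mathbf I)$, $\mathbf I\subseteq V\times E$, each edge incident with exactly two distinct vertices (multiple edges allowed). A graph is regular of valency $k$ with edge-multiplicity $\lambda$ if every vertex is adjacent to exactly $k$ vertices and every pair of adjacent vertices shares exactly $\lambda$ edges. The base graph is the simple graph on the same vertices with edges the pairs of adjacent vertices. The $\mu$-extender $\Gamma^{(\mu)}$ of a graph $\Gamma$ replaces each edge by $\mu$ edges with the same two end vertices; $\Gamma'$ is a $(G,\mu)$-extender of $\Gamma$ if $\Gamma'\cong\Gamma^{(\mu)}$ and both $\Gamma$ and $\Gamma'$ are $G$-arc-transitive. $\mathrm{Core}_G(X)=\bigcap_{g\in G}X^g$. $\mathrm{Cos}(G,H,J)$: vertices $\{Hx\}$, edges $\{Jy\}$, $Hx$ incident with $Jy$ iff $yx^{-1}\in JH$; $G$ acts by right multiplication. $\mathrm{SimpCos}(G,H,HgH)$: simple graph on $\{Hx\}$ with $\{Hx,Hy\}$ an edge iff $yx^{-1}\in HgH$. *)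

From Stdlib Require Import List Relations.
Import ListNotations.

Set Implicit Arguments.

Record group := Group {
  carrier :> Type;
  gmul : carrier -> carrier -> carrier;
  ginv : carrier -> carrier;
  gone : carrier;
  gmulA : forall x y z, gmul x (gmul y z) = gmul (gmul x y) z;
  gmul1 : forall x, gmul gone x = x;
  gmulV : forall x, gmul (ginv x) x = gone
}.

Arguments gmul {g}.
Arguments ginv {g}.
Arguments gone {g}.

Section GroupDefs.
Variable G : group.

Definition is_subgroup (S : G -> Prop) : Prop :=
  S gone /\ (forall x y, S x -> S y -> S (gmul x y)) /\ (forall x, S x -> S (ginv x)).

Definition inter (A B : G -> Prop) : G -> Prop := fun x => A x /\ B x.

Definition rcoset (B : G -> Prop) (x : G) : G -> Prop :=
  fun y => exists b, B b /\ y = gmul b x.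

Definition rmul (X : G -> Prop) (x : G) : G -> Prop :=
  fun y => exists z, X z /\ y = gmul z x.

Definition prodset (A B : G -> Prop) : G -> Prop :=
  fun z => exists a b, A a /\ B b /\ z = gmul a b.

(** conjugate X^g = g^-1 X g *)
Definition conjset (X : G -> Prop) (g : G) : G -> Prop :=
  fun z => X (gmul g (gmul z (ginv g))).

Definition core (X : G -> Prop) : G -> Prop :=
  fun z => forall g, conjset X g z.

Definition generated (A : G -> Prop) : G -> Prop :=
  fun x => forall S, is_subgroup S -> (forall a, A a -> S a) -> S x.

End GroupDefs.

Arguments is_subgroup {G}.
Arguments inter {G}.
Arguments rcoset {G}.
Arguments rmul {G}.
Arguments prodset {G}.
Arguments conjset {G}.
Arguments core {G}.
Arguments generated {G}.

Definition card_eq (A : Type) (P : A -> Prop) (n : nat) : Prop :=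
  exists l : list A, NoDup l /\ length l = n /\ forall a, P a <-> In a l.

Definition finite_set (A : Type) (P : A -> Prop) : Prop := exists n, card_eq P n.

Definition index {G : group} (A B : G -> Prop) (n : nat) : Prop :=
  card_eq (fun X : G -> Prop => exists x, A x /\ X = rcoset B x) n.

Record graph := Graph { gV : Type; gE : Type; gI : gV -> gE -> Prop }.
Arguments gI {g}.

Definition is_graph (Gm : graph) : Prop :=
  forall e : gE Gm, exists u v : gV Gm, u <> v /\ gI u e /\ gI v e /\
    forall w, gI w e -> w = u \/ w = v.

Definition adj {Gm : graph} (u v : gV Gm) : Prop :=
  u <> v /\ exists e, gI u e /\ gI v e.

Definition locally_finite (Gm : graph) : Prop :=
  forall v : gV Gm, finite_set (fun e => gI v e).

Definition regular (Gm : graph) (k lam : nat) : Prop :=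
  (forall v : gV Gm, card_eq (adj v) k) /\
  (forall u v : gV Gm, adj u v -> card_eq (fun e => gI u e /\ gI v e) lam).

Definition connected (Gm : graph) : Prop :=
  forall u v : gV Gm, clos_refl_trans _ (@adj Gm) u v.

Definition simple (Gm : graph) : Prop :=
  forall (u v : gV Gm) (e f : gE Gm), u <> v ->
    gI u e -> gI v e -> gI u f -> gI v f -> e = f.

Definition bijective (A B : Type) (f : A -> B) : Prop :=
  exists g : B -> A, (forall a, g (f a) = a) /\ (forall b, f (g b) = b).

Definition graph_iso (G1 G2 : graph) : Prop :=
  exists (fV : gV G1 -> gV G2) (fE : gE G1 -> gE G2),
    bijective fV /\ bijective fE /\
    forall v e, gI v e <-> gI (fV v) (fE e).

Definition of_simple (V : Type) (R : V -> V -> Prop) : graph :=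
  {| gV := V;
     gE := {X : V -> Prop | exists u v, R u v /\ X = (fun w => w = u \/ w = v)};
     gI := fun w X => proj1_sig X w |}.

Definition base_graph (Gm : graph) : graph := of_simple (@adj Gm).

(** mu-extender: each edge replaced by mu parallel edges *)
Definition extender (Gm : graph) (mu : nat) : graph :=
  {| gV := gV Gm;
     gE := (gE Gm * {i : nat | i < mu})%type;
     gI := fun v ei => gI v (fst ei) |}.

Section Cos.
Variable G : group.

Definition CosV (H : G -> Prop) : Type := {X : G -> Prop | exists x, X = rcoset H x}.

Definition cos_inc (H J : G -> Prop) (X : CosV H) (Y : CosV J) : Prop :=
  exists x y, proj1_sig X = rcoset H x /\ proj1_sig Y = rcoset J y /\
    prodset J H (gmul y (ginv x)).

Definition Cos (H J : G -> Prop) : graph :=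
  {| gV := CosV H; gE := CosV J; gI := @cos_inc H J |}.

Definition simpcos_adj (H : G -> Prop) (g : G) (X Y : CosV H) : Prop :=
  exists x y, proj1_sig X = rcoset H x /\ proj1_sig Y = rcoset H y /\
    exists h1 h2, H h1 /\ H h2 /\ gmul y (ginv x) = gmul (gmul h1 g) h2.

Definition SimpCos (H : G -> Prop) (g : G) : graph := of_simple (@simpcos_adj H g).

Definition cos_action_aut (H J : G -> Prop) : Prop :=
  forall (x : G) (v : CosV H) (e : CosV J),
    (exists v' : CosV H, proj1_sig v' = rmul (proj1_sig v) x) /\
    (exists e' : CosV J, proj1_sig e' = rmul (proj1_sig e) x) /\
    (forall (v' : CosV H) (e' : CosV J),
       proj1_sig v' = rmul (proj1_sig v) x -> proj1_sig e' = rmul (proj1_sig e) x ->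
       (cos_inc v e <-> cos_inc v' e')).

Definition cos_arc (H J : G -> Prop) (u : CosV H) (e : CosV J) (v : CosV H) : Prop :=
  u <> v /\ cos_inc u e /\ cos_inc v e.

Definition cos_arc_transitive (H J : G -> Prop) : Prop :=
  forall (u v u' v' : CosV H) (e e' : CosV J),
    cos_arc u e v -> cos_arc u' e' v' ->
    exists x, rmul (proj1_sig u) x = proj1_sig u' /\
              rmul (proj1_sig e) x = proj1_sig e' /\
              rmul (proj1_sig v) x = proj1_sig v'.

Definition same_action (H J : G -> Prop) (x y : G) : Prop :=
  (forall v : CosV H, rmul (proj1_sig v) x = rmul (proj1_sig v) y) /\
  (forall e : CosV J, rmul (proj1_sig e) x = rmul (proj1_sig e) y).

End Cos.

Arguments CosV {G}.
Arguments cos_inc {G H J}.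
Arguments Cos {G}.
Arguments simpcos_adj {G} H g X Y.
Arguments SimpCos {G}.
Arguments cos_action_aut {G}.
Arguments cos_arc {G H J}.
Arguments cos_arc_transitive {G}.
Arguments same_action {G}.

(* Write M for J or for L = <K, g>. In both cases H ∩ M has index 2 in M with right
   transversal {1, g}, hence g^2 ∈ H and g normalizes H ∩ M, and therefore M H = H ∪ g H.
   So the edge M w of Cos(G, H, M) has exactly the two ends H w and H g w, the neighbours of
   H a are the H g h a (h ∈ H), and the edges joining H a to H g h a are the M k h a with
   k ∈ K = H ∩ H^g. Counting these by cosets gives valency |H : K| and multiplicity |K : H ∩ M|.
   Since g normalizes K and g^2 ∈ K, L = K ∪ K g; so K ≤ L makes Cos(G, H, L) simple, and
   sending each J-coset to the L-coset containing it exhibits Γ as the λ-extender of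
   Cos(G, H, L). *)

From Stdlib Require Import List Relations FunctionalExtensionality PropExtensionality ProofIrrelevance ClassicalEpsilon.
Import ListNotations.

Lemma pred_ext {A : Type} (P Q : A -> Prop) : (forall z, P z <-> Q z) -> P = Q.
Proof. intro h; apply functional_extensionality; intro z; apply propositional_extensionality; auto. Qed.

Lemma sig_eq {A : Type} {P : A -> Prop} (u v : {a | P a}) : proj1_sig u = proj1_sig v -> u = v.
Proof. destruct u, v; simpl; apply subset_eq_compat. Qed.

Section GroupLaws.
Context {G : group}.
Implicit Types x y z : G.

Lemma mulA x y z : gmul x (gmul y z) = gmul (gmul x y) z.
Proof. apply gmulA. Qed.

Lemma mulA' x y z : gmul (gmul x y) z = gmul x (gmul y z).
Proof. now rewrite mulA. Qed.

Lemma mul1g x : gmul gone x = x.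
Proof. apply gmul1. Qed.

Lemma mulVg x : gmul (ginv x) x = gone.
Proof. apply gmulV. Qed.

Lemma mulKg x y : gmul (ginv x) (gmul x y) = y.
Proof. now rewrite mulA, mulVg, mul1g. Qed.

Lemma mulgV x : gmul x (ginv x) = gone.
Proof.
  assert (idem : gmul (gmul x (ginv x)) (gmul x (ginv x)) = gmul x (ginv x)).
  { rewrite mulA', (mulA (ginv x)), mulVg, mul1g. reflexivity. }
  rewrite <- (mulKg (gmul x (ginv x)) (gmul x (ginv x))), idem. apply mulVg.
Qed.

Lemma mulg1 x : gmul x gone = x.
Proof. rewrite <- (mulVg x), mulA, mulgV. apply mul1g. Qed.

Lemma mulKVg x y : gmul x (gmul (ginv x) y) = y.
Proof. now rewrite mulA, mulgV, mul1g. Qed.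

Lemma inv_uniq x y : gmul x y = gone -> ginv x = y.
Proof. intro h. rewrite <- (mulg1 (ginv x)), <- h. apply mulKg. Qed.

Lemma invK x : ginv (ginv x) = x.
Proof. apply inv_uniq, mulVg. Qed.

Lemma invM x y : ginv (gmul x y) = gmul (ginv y) (ginv x).
Proof. apply inv_uniq. now rewrite mulA', mulKVg, mulgV. Qed.

Lemma inv1 : ginv (@gone G) = gone.
Proof. apply inv_uniq, mul1g. Qed.
End GroupLaws.

Ltac gsimpl := repeat rewrite ?mulA', ?invM, ?invK, ?inv1, ?mul1g, ?mulg1, ?mulgV, ?mulVg, ?mulKg, ?mulKVg.
Ltac gsimpl_in h := repeat rewrite ?mulA', ?invM, ?invK, ?inv1, ?mul1g, ?mulg1, ?mulgV, ?mulVg, ?mulKg, ?mulKVg in h.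

Section Subgroups.
Context {G : group} {B : G -> Prop} (sB : is_subgroup B).
Implicit Types x y : G.

Lemma sg1 : B gone. Proof. apply sB. Qed.
Lemma sgM x y : B x -> B y -> B (gmul x y). Proof. apply sB. Qed.
Lemma sgV x : B x -> B (ginv x). Proof. apply sB. Qed.

Lemma sgMV x y : B x -> B y -> B (gmul x (ginv y)).
Proof. intros hx hy. apply sgM; auto. now apply sgV. Qed.

Lemma sgVr x : B (ginv x) -> B x.
Proof. intro h; rewrite <- invK; now apply sgV. Qed.

Lemma sgMl x y : B x -> B (gmul x y) -> B y.
Proof. intros hx hxy. rewrite <- (mulKg x y). apply sgM; auto. now apply sgV. Qed.

Lemma rcoset_mem x y : rcoset B x y <-> B (gmul y (ginv x)).
Proof.
  split.
  - intros [b [hb ->]]. now gsimpl.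
  - intro h. exists (gmul y (ginv x)). split; auto. now gsimpl.
Qed.

Lemma rcoset_eq x y : rcoset B x = rcoset B y <-> B (gmul x (ginv y)).
Proof.
  split.
  - intro e. apply (rcoset_mem y x). rewrite <- e. apply rcoset_mem. gsimpl. apply sg1.
  - intro h. apply pred_ext. intro z. rewrite !rcoset_mem. split; intro hz.
    + replace (gmul z (ginv y)) with (gmul (gmul z (ginv x)) (gmul x (ginv y))) by now gsimpl.
      now apply sgM.
    + replace (gmul z (ginv x)) with (gmul (gmul z (ginv y)) (ginv (gmul x (ginv y)))) by now gsimpl.
      apply sgM; auto. now apply sgV.
Qed.

Lemma rcoset1 : rcoset B gone = B.
Proof. apply pred_ext. intro z. rewrite rcoset_mem. gsimpl. tauto. Qed.
End Subgroups.

Lemma rmul_rcoset {G : group} (B : G -> Prop) (x y : G) : rmul (rcoset B x) y = rcoset B (gmul x y).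
Proof.
  apply pred_ext. intro z. split.
  - intros [w [[b [hb ->]] ->]]. exists b. split; auto. apply mulA'.
  - intros [b [hb ->]]. exists (gmul b x). split; [now exists b | apply mulA].
Qed.

Lemma rmul_subgroup {G : group} {B : G -> Prop} (sB : is_subgroup B) x : rmul B x = B <-> B x.
Proof.
  pose proof (rmul_rcoset B gone x) as e. pose proof (rcoset_eq sB x gone) as i.
  rewrite rcoset1, mul1g in e. rewrite rcoset1 in i. rewrite e, i. gsimpl. tauto.
Qed.

Lemma inter_subgroup {G : group} {A B : G -> Prop} :
  is_subgroup A -> is_subgroup B -> is_subgroup (inter A B).
Proof.
  intros sA sB. split; [|split].
  - split; apply sg1; auto.
  - intros x y [] []. split; apply sgM; auto.
  - intros x []. split; apply sgV; auto.
Qed.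

Lemma generated_subgroup {G : group} (A : G -> Prop) : is_subgroup (generated A).
Proof.
  split; [|split].
  - intros S sS _. apply (sg1 sS).
  - intros x y hx hy S sS hA. apply (sgM sS); [apply hx|apply hy]; auto.
  - intros x hx S sS hA. apply (sgV sS); apply hx; auto.
Qed.

Lemma generated_base {G : group} (A : G -> Prop) a : A a -> generated A a.
Proof. intros ha S _ hA. auto. Qed.

Lemma sgV_iff {G : group} {B : G -> Prop} (sB : is_subgroup B) x : B (ginv x) <-> B x.
Proof. split; [apply (sgVr sB) | apply (sgV sB)]. Qed.

Lemma conj_subgroup {G : group} {A : G -> Prop} (g : G) : is_subgroup A -> is_subgroup (conjset A g).
Proof.
  intros sA. unfold conjset. split; [|split].
  - gsimpl. apply (sg1 sA).
  - intros x y hx hy.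
    replace (gmul g (gmul (gmul x y) (ginv g))) with
      (gmul (gmul g (gmul x (ginv g))) (gmul g (gmul y (ginv g)))) by now gsimpl.
    now apply (sgM sA).
  - intros x hx.
    replace (gmul g (gmul (ginv x) (ginv g))) with (ginv (gmul g (gmul x (ginv g)))) by now gsimpl.
    now apply (sgV sA).
Qed.

Definition mkC {G : group} (B : G -> Prop) (x : G) : CosV B :=
  exist _ (rcoset B x) (ex_intro _ x eq_refl).

Lemma CosV_mkC {G : group} {B : G -> Prop} (v : CosV B) : exists a, v = mkC B a.
Proof. destruct v as [X [a ->]]. exists a. now apply sig_eq. Qed.

Lemma mkC_eq {G : group} {B : G -> Prop} (sB : is_subgroup B) x y :
  mkC B x = mkC B y <-> B (gmul x (ginv y)).
Proof.
  rewrite <- (rcoset_eq sB). split; intro h.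
  - exact (f_equal (@proj1_sig _ _) h).
  - now apply sig_eq.
Qed.

Lemma rmul_CosV {G : group} {B : G -> Prop} (v : CosV B) y :
  exists x, rmul (proj1_sig v) y = rcoset B x.
Proof. destruct v as [X [a ->]]. exists (gmul a y). apply rmul_rcoset. Qed.

Definition cos_rmul {G : group} {B : G -> Prop} (y : G) (v : CosV B) : CosV B :=
  exist _ (rmul (proj1_sig v) y) (rmul_CosV v y).

Lemma cos_rmul_mkC {G : group} (B : G -> Prop) y a : cos_rmul y (mkC B a) = mkC B (gmul a y).
Proof. apply sig_eq, rmul_rcoset. Qed.

Lemma card_ext {A : Type} (P Q : A -> Prop) n :
  (forall a, P a <-> Q a) -> card_eq P n -> card_eq Q n.
Proof. intros h [l [hnd [hlen hmem]]]. exists l. split; [|split]; auto. intro a; rewrite <- h; auto. Qed.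

Lemma list_image_transfer {A B X : Type} (S : X -> Prop) (F : X -> A) (F' : X -> B) :
  (forall x y, S x -> S y -> (F x = F y <-> F' x = F' y)) ->
  forall l, NoDup l -> (forall a, In a l -> exists x, S x /\ a = F x) ->
  exists l', NoDup l' /\ length l' = length l /\
    forall b, In b l' <-> exists x, S x /\ In (F x) l /\ b = F' x.
Proof.
  intros hF l. induction l as [|a l IH]; intros hnd hin.
  - exists []. simpl. split; [constructor|split; auto]. intro b; split; [tauto|]. intros [x [_ [[] _]]].
  - inversion hnd as [|? ? hna hnd']; subst.
    destruct (hin a (or_introl eq_refl)) as [x0 [hx0 ->]].
    destruct IH as [l' [h1 [h2 h3]]]; auto. { intros a' ha'; apply hin; now right. }
    exists (F' x0 :: l'). split; [|split].
    + constructor; auto. intro hi. apply h3 in hi. destruct hi as [x [hx [hi e]]].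
      apply hna. rewrite (proj2 (hF x0 x hx0 hx) e). exact hi.
    + simpl; now rewrite h2.
    + intro b. simpl. rewrite h3. split.
      * intros [<-|[x [hx [hi ->]]]]; eauto.
      * intros [x [hx [[e|hi] ->]]]; [left | right; eauto]. now apply (hF x0 x hx0 hx).
Qed.

Lemma card_image_transfer {A B X : Type} (S : X -> Prop) (F : X -> A) (F' : X -> B) n :
  (forall x y, S x -> S y -> (F x = F y <-> F' x = F' y)) ->
  card_eq (fun a => exists x, S x /\ a = F x) n -> card_eq (fun b => exists x, S x /\ b = F' x) n.
Proof.
  intros hF [l [hnd [hlen hmem]]].
  destruct (list_image_transfer S F F' hF l hnd) as [l' [h1 [h2 h3]]]; [intros a; apply hmem|].
  exists l'. split; [|split]; [auto | congruence |].
  intro b. rewrite h3. split.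
  - intros [x [hx ->]]. exists x. repeat split; auto. apply hmem. eauto.
  - intros [x [hx [_ ->]]]. eauto.
Qed.

Lemma card_image_index {G : group} {A B : G -> Prop} (sB : is_subgroup B) {X : Type} (F : G -> X) n :
  (forall x y, A x -> A y -> (F x = F y <-> B (gmul x (ginv y)))) ->
  index A B n -> card_eq (fun v => exists x, A x /\ v = F x) n.
Proof.
  intros hF hn. apply (card_image_transfer A (rcoset B) F); [|exact hn].
  intros x y hx hy. rewrite (rcoset_eq sB). symmetry. auto.
Qed.

Lemma bijective_of_inj_surj {A B : Type} (f : A -> B) :
  (forall a a', f a = f a' -> a = a') -> (forall b, exists a, f a = b) -> bijective f.
Proof.
  intros hi hs. exists (fun b => proj1_sig (constructive_indefinite_description _ (hs b))).
  split.
  - intro a. apply hi. exact (proj2_sig (constructive_indefinite_description _ (hs (f a)))).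
  - intro b. exact (proj2_sig (constructive_indefinite_description _ (hs b))).
Qed.

(* [a0] is only a default element for [nth]. *)
Lemma uniform_fibres_bijection {A B : Type} (f : A -> B) (n : nat) (a0 : A) :
  (forall b, card_eq (fun a => f a = b) n) ->
  exists h : A -> B * {i : nat | i < n}, bijective h /\ forall a, fst (h a) = f a.
Proof.
  intro hc.
  set (L := fun b => proj1_sig (constructive_indefinite_description _ (hc b))).
  assert (hL : forall b, NoDup (L b) /\ length (L b) = n /\ forall a, f a = b <-> In a (L b)).
  { intro b. exact (proj2_sig (constructive_indefinite_description _ (hc b))). }
  assert (hp : forall a, exists i, i < n /\ nth i (L (f a)) a0 = a).
  { intro a. destruct (hL (f a)) as [_ [hl hm]]. rewrite <- hl. apply In_nth. now apply hm. }
  set (P := fun a => constructive_indefinite_description _ (hp a)).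
  exists (fun a => (f a, exist _ (proj1_sig (P a)) (proj1 (proj2_sig (P a))))).
  split; [|reflexivity].
  apply bijective_of_inj_surj.
  - intros a a' e. injection e as e1 e2.
    rewrite <- (proj2 (proj2_sig (P a))), <- (proj2 (proj2_sig (P a'))). rewrite e1 at 1. now rewrite e2.
  - intros [b [i hi]].
    destruct (hL b) as [hnd [hl hm]].
    set (a := nth i (L b) a0).
    assert (hfa : f a = b). { apply hm. apply nth_In. now rewrite hl. }
    exists a. f_equal; auto. apply sig_eq. simpl.
    pose proof (proj2_sig (P a)) as [hi' q]. simpl in *. revert hi' q. generalize (proj1_sig (P a)).
    intros j hj q. rewrite hfa in q.
    apply (proj1 (NoDup_nth (L b) a0) hnd); try (rewrite hl; auto). now rewrite q.
Qed.

Lemma adj_sym (Gm : graph) (u v : gV Gm) : adj u v -> adj v u.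
Proof. intros [huv [e [hu hv]]]. split; [congruence | eauto]. Qed.

Lemma clos_rt_sym {V : Type} {R : relation V} (hR : forall u v, R u v -> R v u) {u v : V} :
  clos_refl_trans V R u v -> clos_refl_trans V R v u.
Proof.
  intro h. induction h; [apply rt_step; auto | apply rt_refl | eapply rt_trans; eauto].
Qed.

Lemma clos_rt_map {V : Type} {R : relation V} {f : V -> V}
  (hf : forall u v, R u v -> R (f u) (f v)) {u v : V} :
  clos_refl_trans V R u v -> clos_refl_trans V R (f u) (f v).
Proof.
  intro h. induction h; [apply rt_step; auto | apply rt_refl | eapply rt_trans; eauto].
Qed.

(* [{1, g}] is a right transversal of [H ∩ M] in [M]; both [J] and [L] are of this shape. *)
Record index2_witness {G : group} (H M : G -> Prop) (g : G) : Prop := {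
  i2_subgroup : is_subgroup M;
  i2_in : M g;
  i2_notin : ~ H g;
  i2_split : forall m, M m -> H m \/ H (gmul m (ginv g))
}.
Arguments i2_subgroup {G H M g}.
Arguments i2_in {G H M g}.
Arguments i2_notin {G H M g}.
Arguments i2_split {G H M g}.

Section IndexTwoCosetGraph.
Context {G : group} {H M : G -> Prop} {g : G}.
Hypotheses (sH : is_subgroup H) (hM : index2_witness H M g).

Let sM := i2_subgroup hM.
Let Mg := i2_in hM.
Let gnH := i2_notin hM.

Lemma i2_sq : H (gmul g g).
Proof.
  assert (hgg : M (gmul g g)) by (apply (sgM sM); exact Mg).
  destruct (i2_split hM _ hgg) as [h|h]; [exact h|]. gsimpl_in h. contradiction.
Qed.

Lemma i2_conj m : H m -> M m -> H (gmul g (gmul m (ginv g))).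
Proof.
  intros hm hmM.
  assert (hc : M (gmul g (gmul m (ginv g)))) by (apply (sgM sM); [|apply (sgM sM)]; auto; apply (sgV sM), Mg).
  destruct (i2_split hM _ hc) as [h|h]; auto. exfalso. apply gnH.
  replace g with (gmul (gmul (gmul g (gmul m (ginv g))) (ginv g)) (gmul (gmul g g) (ginv m))) by now gsimpl.
  apply (sgM sH); auto. apply (sgM sH); [apply i2_sq | apply (sgV sH), hm].
Qed.

Lemma i2_conjV m : H m -> M m -> H (gmul (ginv g) (gmul m g)).
Proof.
  intros hm hmM.
  replace (gmul (ginv g) (gmul m g)) with
    (gmul (ginv (gmul g g)) (gmul (gmul g (gmul m (ginv g))) (gmul g g))) by now gsimpl.
  apply (sgM sH); [apply (sgV sH), i2_sq | apply (sgM sH); [apply i2_conj | apply i2_sq]]; auto.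
Qed.

Lemma prodset_i2 z : prodset M H z <-> H z \/ H (gmul (ginv g) z).
Proof.
  split.
  - intros [m [h [hm [hh ->]]]]. destruct (i2_split hM m hm) as [h1|h1]; [left; now apply (sgM sH)|].
    right. assert (hc : H (gmul (ginv g) (gmul (gmul m (ginv g)) g))).
    { apply i2_conjV; auto. apply (sgM sM); auto. apply (sgV sM), Mg. }
    gsimpl_in hc. gsimpl. rewrite mulA. now apply (sgM sH).
  - intros [h|h].
    + exists gone, z. split; [apply (sg1 sM)|split; auto]. now gsimpl.
    + exists g, (gmul (ginv g) z). split; [exact Mg|split; auto]. now gsimpl.
Qed.

Lemma cos_inc_mkC a w :
  cos_inc (mkC H a) (mkC M w) <-> H (gmul w (ginv a)) \/ H (gmul (ginv g) (gmul w (ginv a))).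
Proof.
  rewrite <- prodset_i2. split.
  - intros [x [y [hx [hy [m [h [hm [hh e]]]]]]]]. simpl in hx, hy.
    apply (rcoset_eq sH) in hx. apply (rcoset_eq sM) in hy.
    exists (gmul (gmul w (ginv y)) m), (gmul h (gmul x (ginv a))).
    split; [now apply (sgM sM)|split].
    + apply (sgM sH); auto. replace (gmul x (ginv a)) with (ginv (gmul a (ginv x))) by now gsimpl.
      now apply (sgV sH).
    + replace (gmul w (ginv a)) with (gmul (gmul w (ginv y)) (gmul (gmul y (ginv x)) (gmul x (ginv a))))
        by now gsimpl.
      rewrite e. now gsimpl.
  - intro hp. now exists a, w.
Qed.

Lemma cos_inc_ends v w : cos_inc v (mkC M w) <-> v = mkC H w \/ v = mkC H (gmul g w).
Proof.
  destruct (CosV_mkC v) as [a ->]. rewrite cos_inc_mkC, !(mkC_eq sH).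
  rewrite <- (sgV_iff sH (gmul w (ginv a))). gsimpl.
  assert (hsq := i2_sq).
  split; (intros [h|h]; [now left | right]).
  - replace (gmul a (gmul (ginv w) (ginv g))) with
      (ginv (gmul (gmul g g) (gmul (ginv g) (gmul w (ginv a))))) by now gsimpl.
    apply (sgV sH), (sgM sH); auto.
  - replace (gmul (ginv g) (gmul w (ginv a))) with
      (gmul (ginv (gmul g g)) (ginv (gmul a (gmul (ginv w) (ginv g))))) by now gsimpl.
    apply (sgM sH); now apply (sgV sH).
Qed.

Lemma mkC_g_neq w : mkC H w <> mkC H (gmul g w).
Proof. rewrite (mkC_eq sH). gsimpl. intro h. apply gnH, (sgVr sH), h. Qed.

Lemma cos_is_graph : is_graph (Cos H M).
Proof.
  intros e. destruct (CosV_mkC e) as [w ->]. exists (mkC H w), (mkC H (gmul g w)).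
  simpl. rewrite !cos_inc_ends. repeat split; auto using mkC_g_neq.
  intros u hu. now apply cos_inc_ends.
Qed.

Lemma cos_edges_at a e : cos_inc (mkC H a) e <-> exists h, H h /\ e = mkC M (gmul h a).
Proof.
  split.
  - destruct (CosV_mkC e) as [w ->]. rewrite cos_inc_ends, !(mkC_eq sH). intros [hw|hw]; gsimpl_in hw.
    + exists (gmul w (ginv a)). split; [|apply (mkC_eq sM); gsimpl; apply (sg1 sM)].
      apply (sgVr sH). gsimpl. exact hw.
    + exists (gmul g (gmul w (ginv a))). split.
      * apply (sgVr sH). gsimpl. exact hw.
      * apply (mkC_eq sM). gsimpl. apply (sgV sM), Mg.
  - intros [h [hh ->]]. apply cos_inc_ends. left. apply (mkC_eq sH). gsimpl. now apply (sgV sH).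
Qed.

Lemma cos_adj_mkC a v :
  @adj (Cos H M) (mkC H a) v <-> exists h, H h /\ v = mkC H (gmul g (gmul h a)).
Proof.
  split.
  - intros [huv [e [hu hv]]]. simpl in hu, hv. apply cos_edges_at in hu. destruct hu as [h [hh ->]].
    apply cos_inc_ends in hv. destruct hv as [->| ->]; eauto.
    exfalso. apply huv, (mkC_eq sH). gsimpl. now apply (sgV sH).
  - intros [h [hh ->]]. split.
    + intro e. apply (mkC_g_neq (gmul h a)). rewrite <- e. apply (mkC_eq sH). gsimpl. exact hh.
    + exists (mkC M (gmul h a)). simpl. rewrite cos_edges_at, cos_inc_ends. eauto.
Qed.

Lemma cos_common_edges a h e : H h ->
  (cos_inc (mkC H a) e /\ cos_inc (mkC H (gmul g (gmul h a))) e <->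
   exists k, inter H (conjset H g) k /\ e = mkC M (gmul k (gmul h a))).
Proof.
  intros hh. rewrite cos_edges_at. unfold inter, conjset. split.
  - intros [[h' [hh' ->]] hv]. apply cos_inc_ends in hv. rewrite !(mkC_eq sH) in hv. gsimpl_in hv.
    destruct hv as [hv|hv].
    + exfalso. apply gnH.
      replace g with (gmul (gmul g (gmul h (ginv h'))) (gmul h' (ginv h))) by now gsimpl.
      apply (sgM sH); [exact hv | now apply (sgMV sH)].
    + exists (gmul h' (ginv h)). split; [split|].
      * now apply (sgMV sH).
      * apply (sgVr sH). gsimpl. exact hv.
      * f_equal. now gsimpl.
  - intros [k [[hk hkg] ->]]. split.
    + exists (gmul k h). split; [now apply (sgM sH)|]. f_equal. now gsimpl.
    + apply cos_inc_ends. right. apply (mkC_eq sH). apply (sgVr sH). gsimpl. exact hkg.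
Qed.

Lemma cos_locally_finite n : index H (inter H M) n -> locally_finite (Cos H M).
Proof.
  intros hn v. exists n. destruct (CosV_mkC v) as [a ->].
  eapply card_ext; [intro e; symmetry; apply cos_edges_at|].
  apply (card_image_index (inter_subgroup sH sM)); [|exact hn].
  intros x y hx hy. rewrite (mkC_eq sM). gsimpl. unfold inter.
  split; [|tauto]. split; auto. now apply (sgMV sH).
Qed.

Lemma cos_valency k : index H (inter H (conjset H g)) k ->
  forall v : CosV H, card_eq (@adj (Cos H M) v) k.
Proof.
  intros hk v. destruct (CosV_mkC v) as [a ->].
  eapply card_ext; [intro u; symmetry; apply cos_adj_mkC|].
  apply (card_image_index (inter_subgroup sH (conj_subgroup g sH))); [|exact hk].
  intros x y hx hy. rewrite (mkC_eq sH). gsimpl. unfold inter, conjset. gsimpl.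
  split; [|tauto]. split; auto. now apply (sgMV sH).
Qed.

Lemma cos_multiplicity lam : index (inter H (conjset H g)) (inter H M) lam ->
  forall u v : CosV H, @adj (Cos H M) u v ->
  card_eq (fun e : CosV M => cos_inc u e /\ cos_inc v e) lam.
Proof.
  intros hl u v huv. destruct (CosV_mkC u) as [a ->].
  apply cos_adj_mkC in huv. destruct huv as [h [hh ->]].
  eapply card_ext; [intro e; symmetry; apply (cos_common_edges a h e hh)|].
  apply (card_image_index (inter_subgroup sH sM)); [|exact hl].
  intros x y [hx _] [hy _]. rewrite (mkC_eq sM). gsimpl. unfold inter.
  split; [|tauto]. split; auto. now apply (sgMV sH).
Qed.

Lemma cos_simple_iff : simple (Cos H M) <-> forall x, inter H (conjset H g) x -> M x.
Proof.
  split.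
  - intros hs x hx.
    assert (hc : forall k, inter H (conjset H g) k ->
              cos_inc (mkC H gone) (mkC M k) /\ cos_inc (mkC H (gmul g (gmul gone gone))) (mkC M k)).
    { intros k hk. apply (cos_common_edges gone gone _ (sg1 sH)). exists k. split; auto. now gsimpl. }
    destruct (hc gone (sg1 (inter_subgroup sH (conj_subgroup g sH)))) as [h1 h2].
    destruct (hc x hx) as [h3 h4]. rewrite mul1g in h2, h4.
    assert (e := hs _ _ _ _ (mkC_g_neq _) h1 h2 h3 h4).
    apply (mkC_eq sM) in e. gsimpl_in e. now apply (sgVr sM).
  - intros hK u v e f huv h1 h2 h3 h4. destruct (CosV_mkC u) as [a ->].
    destruct (proj1 (cos_adj_mkC a v) (conj huv (ex_intro _ e (conj h1 h2)))) as [h [hh ->]].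
    destruct (proj1 (cos_common_edges a h e hh) (conj h1 h2)) as [k [hk ->]].
    destruct (proj1 (cos_common_edges a h f hh) (conj h3 h4)) as [k' [hk' ->]].
    apply (mkC_eq sM). gsimpl. apply (sgMV sM); auto.
Qed.

Lemma cos_inc_rmul y (v : CosV H) (e : CosV M) : cos_inc v e <-> cos_inc (cos_rmul y v) (cos_rmul y e).
Proof.
  destruct (CosV_mkC v) as [a ->]. destruct (CosV_mkC e) as [w ->].
  rewrite !cos_rmul_mkC, !cos_inc_mkC. gsimpl. tauto.
Qed.

Lemma cos_action_is_aut : cos_action_aut H M.
Proof.
  intros x v e. split; [|split]; [now exists (cos_rmul x v) | now exists (cos_rmul x e) |].
  intros v' e' hv he.
  replace v' with (cos_rmul x v) by (apply sig_eq; now rewrite hv).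
  replace e' with (cos_rmul x e) by (apply sig_eq; now rewrite he).
  apply cos_inc_rmul.
Qed.

(* An arc [(H g w, M w, H w)] is [(H w', M w', H g w')] for [w' = g w], as [g ∈ M] and [g^2 ∈ H]. *)
Lemma cos_arc_mkC {u : CosV H} {e : CosV M} {v : CosV H} : cos_arc u e v ->
  exists w, u = mkC H w /\ e = mkC M w /\ v = mkC H (gmul g w).
Proof.
  intros [huv [hu hv]]. destruct (CosV_mkC e) as [w ->].
  apply cos_inc_ends in hu, hv.
  destruct hu as [->| ->], hv as [->| ->]; try (now contradiction huv); [now exists w|].
  exists (gmul g w). split; [reflexivity|split].
  - apply (mkC_eq sM). gsimpl. apply (sgV sM), Mg.
  - apply (mkC_eq sH), (sgVr sH). gsimpl. apply i2_sq.
Qed.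

Lemma cos_arc_trans : cos_arc_transitive H M.
Proof.
  intros u v u' v' e e' ha ha'.
  destruct (cos_arc_mkC ha) as [w [-> [-> ->]]]. destruct (cos_arc_mkC ha') as [w' [-> [-> ->]]].
  exists (gmul (ginv w) w'). simpl. rewrite !rmul_rcoset. gsimpl. auto.
Qed.

Lemma cos_adj_rmul y u v :
  @adj (Cos H M) u v -> @adj (Cos H M) (cos_rmul y u) (cos_rmul y v).
Proof.
  destruct (CosV_mkC u) as [a ->]. rewrite cos_rmul_mkC, !cos_adj_mkC.
  intros [h [hh ->]]. exists h. split; auto. rewrite cos_rmul_mkC. f_equal. now gsimpl.
Qed.

Lemma cos_reach_generated {u v : CosV H} : clos_refl_trans _ (@adj (Cos H M)) u v ->
  forall a b, u = mkC H a -> v = mkC H b -> generated (fun y => H y \/ M y) (gmul b (ginv a)).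
Proof.
  pose proof (generated_subgroup (fun y => H y \/ M y)) as sgen.
  induction 1 as [u v huv|u|u v w _ IH1 _ IH2]; intros a b hu hv.
  - subst. apply cos_adj_mkC in huv. destruct huv as [h [hh hb]]. apply (mkC_eq sH) in hb.
    replace (gmul b (ginv a)) with (gmul (gmul b (ginv (gmul g (gmul h a)))) (gmul g h)) by now gsimpl.
    apply (sgM sgen); [|apply (sgM sgen)]; apply generated_base; auto.
  - rewrite hu in hv. apply (mkC_eq sH) in hv. apply generated_base. left.
    apply (sgVr sH). gsimpl. exact hv.
  - subst. destruct (CosV_mkC v) as [c ->].
    replace (gmul b (ginv a)) with (gmul (gmul b (ginv c)) (gmul c (ginv a))) by now gsimpl.
    apply (sgM sgen); eauto.
Qed.

Lemma cos_reachable_subgroup :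
  is_subgroup (fun x => clos_refl_trans _ (@adj (Cos H M)) (mkC H gone) (mkC H x)).
Proof.
  assert (hmove : forall x y, clos_refl_trans _ (@adj (Cos H M)) (mkC H gone) (mkC H x) ->
            clos_refl_trans _ (@adj (Cos H M)) (mkC H y) (mkC H (gmul x y))).
  { intros x y hx. rewrite <- (mul1g y) at 1. rewrite <- !cos_rmul_mkC.
    exact (clos_rt_map (cos_adj_rmul y) hx). }
  split; [|split].
  - apply rt_refl.
  - intros x y hx hy. exact (rt_trans _ _ _ _ _ hy (hmove x y hx)).
  - intros x hx. apply (clos_rt_sym (@adj_sym (Cos H M))). specialize (hmove x (ginv x) hx).
    now rewrite mulgV in hmove.
Qed.

Lemma cos_connected_iff : connected (Cos H M) <-> forall x, generated (fun y => H y \/ M y) x.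
Proof.
  split.
  - intros hc x. pose proof (cos_reach_generated (hc (mkC H gone) (mkC H x)) gone x eq_refl eq_refl) as h.
    gsimpl_in h. exact h.
  - intros hgen.
    assert (hS : forall x, clos_refl_trans _ (@adj (Cos H M)) (mkC H gone) (mkC H x)).
    { intro x. apply (hgen x _ cos_reachable_subgroup). intros y hy.
      assert (hy' : H y \/ H (gmul y (ginv g))) by (destruct hy; auto; now apply (i2_split hM)).
      destruct hy' as [hy'|hy'].
      - replace (mkC H y) with (mkC H gone); [apply rt_refl|].
        apply (mkC_eq sH). gsimpl. now apply (sgV sH).
      - apply rt_step, cos_adj_mkC. exists gone. split; [apply (sg1 sH)|].
        apply (mkC_eq sH). now gsimpl. }
    intros u v. destruct (CosV_mkC u) as [a ->]. destruct (CosV_mkC v) as [b ->].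
    apply (rt_trans _ _ _ (mkC H gone)); [apply (clos_rt_sym (@adj_sym (Cos H M)))|]; apply hS.
Qed.

Lemma cos_adj_ends u v : @adj (Cos H M) u v -> exists w, u = mkC H w /\ v = mkC H (gmul g w).
Proof.
  destruct (CosV_mkC u) as [a ->]. rewrite cos_adj_mkC. intros [h [hh ->]].
  exists (gmul h a). split; [|reflexivity]. apply (mkC_eq sH). gsimpl. now apply (sgV sH).
Qed.

Lemma cos_adj_edge w : @adj (Cos H M) (mkC H w) (mkC H (gmul g w)).
Proof. apply cos_adj_mkC. exists gone. split; [apply (sg1 sH) | now gsimpl]. Qed.

Section SimpleQuotient.
Variable R : CosV H -> CosV H -> Prop.
Hypotheses (R_ends : forall u v, R u v -> exists w, u = mkC H w /\ v = mkC H (gmul g w))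
  (R_edges : forall w, R (mkC H w) (mkC H (gmul g w))).

Lemma cos_edge_ends (e : CosV M) :
  exists u v, R u v /\ (fun x => cos_inc x e) = (fun x => x = u \/ x = v).
Proof.
  destruct (CosV_mkC e) as [w ->]. exists (mkC H w), (mkC H (gmul g w)).
  split; auto. apply pred_ext. intro x. apply cos_inc_ends.
Qed.

Lemma cos_iso_of_simple : simple (Cos H M) -> graph_iso (Cos H M) (of_simple R).
Proof.
  intro hs. exists (fun v => v).
  exists (fun e => exist (fun X : CosV H -> Prop => exists u v, R u v /\ X = (fun x => x = u \/ x = v))
                 (fun x => cos_inc x e) (cos_edge_ends e)).
  split; [|split; [|simpl; tauto]]; [now exists (fun v => v)|].
  apply bijective_of_inj_surj.
  - intros e f hef. apply (f_equal (@proj1_sig _ _)) in hef. simpl in hef.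
    destruct (CosV_mkC e) as [w ->].
    assert (hends : forall x, cos_inc x (mkC M w) -> cos_inc x f) by (intros x hx; change ((fun y => cos_inc y f) x); rewrite <- hef; exact hx).
    apply (hs (mkC H w) (mkC H (gmul g w))); try apply hends; try apply cos_inc_ends; auto using mkC_g_neq.
  - intros [X pf]. pose proof pf as [u [v [huv hX]]].
    destruct (R_ends _ _ huv) as [w [-> ->]].
    exists (mkC M w). apply sig_eq. simpl. rewrite hX. apply pred_ext. intro x. apply cos_inc_ends.
Qed.
End SimpleQuotient.

End IndexTwoCosetGraph.

Definition coset_up {G : group} (L X : G -> Prop) : G -> Prop :=
  fun z => exists y, X y /\ L (gmul z (ginv y)).

Section Extender.
Context {G : group} {H J L : G -> Prop} {g : G}.
Hypotheses (sH : is_subgroup H) (hJ : index2_witness H J g) (hL : index2_witness H L g)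
  (JL : forall x, J x -> L x).

Let sJ := i2_subgroup hJ.
Let sL := i2_subgroup hL.

Lemma coset_up_rcoset w : coset_up L (rcoset J w) = rcoset L w.
Proof.
  apply pred_ext. intro z. unfold coset_up. rewrite (@rcoset_mem _ L w z). split.
  - intros [y [hy hz]]. apply rcoset_mem in hy.
    replace (gmul z (ginv w)) with (gmul (gmul z (ginv y)) (gmul y (ginv w))) by now gsimpl.
    apply (sgM sL); auto.
  - intro h. exists w. split; auto. apply rcoset_mem. gsimpl. apply (sg1 sJ).
Qed.

Lemma coset_up_CosV (e : CosV J) : exists x, coset_up L (proj1_sig e) = rcoset L x.
Proof. destruct e as [X [w ->]]. exists w. apply coset_up_rcoset. Qed.

Definition cos_up (e : CosV J) : CosV L := exist _ (coset_up L (proj1_sig e)) (coset_up_CosV e).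

Lemma cos_up_mkC w : cos_up (mkC J w) = mkC L w.
Proof. apply sig_eq, coset_up_rcoset. Qed.

Lemma cos_up_fibre r lam : index L J lam -> card_eq (fun e => cos_up e = mkC L r) lam.
Proof.
  intro hl. apply (card_ext (fun e => exists l, L l /\ e = mkC J (gmul l r))).
  - intro e. split.
    + intros [l [hl' ->]]. rewrite cos_up_mkC. apply (mkC_eq sL). now gsimpl.
    + destruct (CosV_mkC e) as [w ->]. rewrite cos_up_mkC, (mkC_eq sL). intro hw.
      exists (gmul w (ginv r)). split; auto. f_equal. now gsimpl.
  - apply (card_image_index sJ); [|exact hl]. intros x y _ _. rewrite (mkC_eq sJ). gsimpl. tauto.
Qed.

(* Each [L]-coset is the union of [lam] parallel [J]-cosets with the same two ends. *)
Lemma cos_extender_iso lam : index L J lam -> graph_iso (Cos H J) (extender (Cos H L) lam).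
Proof.
  intro hl.
  assert (hfib : forall X : CosV L, card_eq (fun e => cos_up e = X) lam).
  { intro X. destruct (CosV_mkC X) as [r ->]. now apply cos_up_fibre. }
  destruct (uniform_fibres_bijection cos_up lam (mkC J gone) hfib) as [h [hb hfst]].
  exists (fun v => v), h. split; [now exists (fun v => v)|split; [exact hb|]].
  intros v e. simpl. rewrite hfst. destruct (CosV_mkC e) as [w ->].
  rewrite cos_up_mkC, (cos_inc_ends sH hJ), (cos_inc_ends sH hL). tauto.
Qed.
End Extender.

Section SubgroupL.
Context {G : group} {H : G -> Prop} {g : G}.
Hypotheses (sH : is_subgroup H) (Hgg : H (gmul g g)).

Notation K := (inter H (conjset H g)).
Notation L := (generated (fun x => K x \/ x = g)).

Let sK : is_subgroup K := inter_subgroup sH (conj_subgroup g sH).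

Lemma K_conj x : K x -> K (gmul g (gmul x (ginv g))).
Proof.
  unfold inter, conjset. intros [h1 h2]. split; auto.
  replace (gmul g (gmul (gmul g (gmul x (ginv g))) (ginv g)))
    with (gmul (gmul g g) (gmul x (ginv (gmul g g)))) by now gsimpl.
  apply (sgM sH); auto. apply (sgM sH); auto. now apply (sgV sH).
Qed.

Lemma K_conjV x : K x -> K (gmul (ginv g) (gmul x g)).
Proof.
  unfold inter, conjset. intros [h1 h2]. split.
  - replace (gmul (ginv g) (gmul x g))
      with (gmul (ginv (gmul g g)) (gmul (gmul g (gmul x (ginv g))) (gmul g g))) by now gsimpl.
    apply (sgM sH); [now apply (sgV sH)|]. now apply (sgM sH).
  - now gsimpl.
Qed.

Lemma K_sq : K (gmul g g).
Proof. unfold inter, conjset. split; auto. now gsimpl. Qed.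

(* [g] normalizes [K] and [g^2 ∈ K], so [K ∪ K g] is already a group. *)
Lemma L_split x : L x <-> K x \/ K (gmul x (ginv g)).
Proof.
  set (S := fun x => K x \/ K (gmul x (ginv g))).
  assert (sS : is_subgroup S).
  { split; [|split].
    - left. apply (sg1 sK).
    - intros a b [ha|ha] [hb|hb]; unfold S.
      + left. now apply (sgM sK).
      + right. replace (gmul (gmul a b) (ginv g)) with (gmul a (gmul b (ginv g))) by now gsimpl.
        now apply (sgM sK).
      + right. replace (gmul (gmul a b) (ginv g))
          with (gmul (gmul a (ginv g)) (gmul g (gmul b (ginv g)))) by now gsimpl.
        apply (sgM sK); auto. now apply K_conj.
      + left. replace (gmul a b) with (gmul (gmul a (ginv g))
          (gmul (gmul g (gmul (gmul b (ginv g)) (ginv g))) (gmul g g))) by now gsimpl.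
        apply (sgM sK); auto. apply (sgM sK); [now apply K_conj | apply K_sq].
    - intros a [ha|ha]; unfold S.
      + left. now apply (sgV sK).
      + right. replace (gmul (ginv a) (ginv g))
          with (gmul (gmul (ginv g) (gmul (ginv (gmul a (ginv g))) g)) (ginv (gmul g g))) by now gsimpl.
        apply (sgM sK); [apply K_conjV; now apply (sgV sK) | apply (sgV sK), K_sq]. }
  split.
  - intro hx. apply (hx S sS). intros a [ha| ->]; [now left | right]. gsimpl. apply (sg1 sK).
  - intros [hx|hx]; [now apply generated_base; left|].
    replace x with (gmul (gmul x (ginv g)) g) by now gsimpl.
    apply (sgM (generated_subgroup _) (gmul x (ginv g)) g); apply generated_base; auto.
Qed.

Lemma K_sub_L x : K x -> L x.
Proof. intro h. apply L_split. now left. Qed.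

Hypothesis gnH : ~ H g.

Lemma L_index2 : index2_witness H L g.
Proof.
  split.
  - apply generated_subgroup.
  - apply generated_base. now right.
  - exact gnH.
  - intros m hm. destruct (proj1 (L_split m) hm) as [[hk _]|[hk _]]; auto.
Qed.

Lemma inter_H_L x : inter H L x <-> K x.
Proof.
  split.
  - intros [hx hl]. destruct (proj1 (L_split x) hl) as [hk|[hk _]]; auto.
    exfalso. apply gnH, (sgVr sH), (sgMl sH x); auto.
  - intro h. split; [apply h | now apply K_sub_L].
Qed.

Lemma index_L_K : index L K 2.
Proof.
  exists [rcoset K gone; rcoset K g]. split; [|split; [reflexivity|]].
  - constructor; [|constructor; [intros []|constructor]].
    intros [e|[]]. apply (rcoset_eq sK) in e. gsimpl_in e. apply gnH, (proj1 e).
  - intro X. simpl. split.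
    + intros [x [hx ->]]. destruct (proj1 (L_split x) hx) as [hk|hk].
      * left. apply (rcoset_eq sK). gsimpl. now apply (sgV sK).
      * right; left. symmetry. now apply (rcoset_eq sK).
    + intros [<-|[<-|[]]]; [exists gone | exists g]; split; auto.
      * apply (sg1 (i2_subgroup L_index2)).
      * apply (i2_in L_index2).
Qed.
End SubgroupL.

Section SubgroupJ.
Context {G : group} {H J : G -> Prop} {g : G}.
Hypotheses (sH : is_subgroup H) (sJ : is_subgroup J) (gJ : J g) (gnH : ~ H g)
  (HJind : index J (inter H J) 2).

Notation K := (inter H (conjset H g)).
Notation L := (generated (fun x => K x \/ x = g)).

Lemma J_index2 : index2_witness H J g.
Proof.
  pose proof (inter_subgroup sH sJ) as sHJ.
  split; auto. intros j hj. destruct HJind as [l [hnd [hlen hmem]]].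
  destruct l as [|a [|b [|c l]]]; simpl in hlen; try discriminate.
  assert (hin : forall x, J x -> In (rcoset (inter H J) x) [a; b]) by (intros x hx; apply hmem; eauto).
  pose proof (hin _ (sg1 sJ)) as h1. pose proof (hin _ gJ) as h2. pose proof (hin _ hj) as h3.
  assert (hne : rcoset (inter H J) gone <> rcoset (inter H J) g).
  { intro e. apply (rcoset_eq sHJ) in e. gsimpl_in e. apply gnH, (sgVr sH), e. }
  assert (hj' : rcoset (inter H J) j = rcoset (inter H J) gone \/
                rcoset (inter H J) j = rcoset (inter H J) g) by (simpl in *; intuition congruence).
  destruct hj' as [e|e]; apply (rcoset_eq sHJ) in e; gsimpl_in e; [left|right]; apply e.
Qed.

Let hJ := J_index2.
Let Hgg := i2_sq hJ.

Lemma J_sub_L x : J x -> L x.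
Proof.
  intro hx. apply (L_split sH Hgg). unfold inter, conjset.
  destruct (i2_split hJ x hx) as [h|h]; [left | right]; split; auto; apply (i2_conj sH hJ); auto.
  apply (sgM sJ); auto. now apply (sgV sJ).
Qed.

Lemma index_L_J lam : index K (inter H J) lam -> index L J lam.
Proof.
  intro hl. apply (card_ext (fun X => exists x, K x /\ X = rcoset J x)).
  - intro X. split.
    + intros [x [hx ->]]. exists x. split; auto. now apply (K_sub_L sH Hgg).
    + intros [l [hl' ->]]. destruct (proj1 (L_split sH Hgg l) hl') as [h|h]; [now exists l|].
      exists (gmul (ginv g) l). split.
      * replace (gmul (ginv g) l) with (gmul (ginv g) (gmul (gmul l (ginv g)) g)) by now gsimpl.
        now apply (K_conjV sH Hgg).
      * apply (rcoset_eq sJ). now gsimpl.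
  - apply (card_image_index (inter_subgroup sH sJ)); [|exact hl].
    intros x y [hx _] [hy _]. rewrite (rcoset_eq sJ). unfold inter.
    split; [|tauto]. split; auto. now apply (sgMV sH).
Qed.

Lemma L_eq_J_iff : (forall x, L x <-> J x) <-> (forall x, K x -> J x).
Proof.
  split.
  - intros e x hx. exact (proj1 (e x) (K_sub_L sH Hgg x hx)).
  - intros hKJ x. split; [|apply J_sub_L].
    intro hx. destruct (proj1 (L_split sH Hgg x) hx) as [h|h]; auto.
    replace x with (gmul (gmul x (ginv g)) g) by now gsimpl. apply (sgM sJ); auto.
Qed.

Lemma inter_K_J x : inter K J x <-> inter H J x.
Proof.
  unfold inter, conjset. split; [tauto|]. intros [hx hjx]. repeat split; auto.
  now apply (i2_conj sH hJ).
Qed.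
End SubgroupJ.

Lemma same_action_core {G : group} {H J : G -> Prop} (sH : is_subgroup H) (sJ : is_subgroup J) x y :
  same_action H J x y <-> core (inter H J) (gmul x (ginv y)).
Proof.
  unfold core, conjset, inter. split.
  - intros [hv he] c.
    specialize (hv (mkC H c)). specialize (he (mkC J c)). simpl in hv, he.
    rewrite !rmul_rcoset, (rcoset_eq sH) in hv. rewrite !rmul_rcoset, (rcoset_eq sJ) in he.
    gsimpl_in hv. gsimpl_in he. gsimpl. auto.
  - intro hc. split; intro v; destruct (CosV_mkC v) as [a ->]; simpl; rewrite !rmul_rcoset.
    + apply (rcoset_eq sH). specialize (hc a). gsimpl_in hc. gsimpl. tauto.
    + apply (rcoset_eq sJ). specialize (hc a). gsimpl_in hc. gsimpl. tauto.
Qed.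

Lemma arc_stabiliser {G : group} {H J : G -> Prop} (g : G) (sH : is_subgroup H) (sJ : is_subgroup J) x :
  (rmul H x = H /\ rmul J x = J /\ rmul (rcoset H g) x = rcoset H g) <->
  inter (inter H (conjset H g)) J x.
Proof.
  rewrite (rmul_subgroup sH), (rmul_subgroup sJ), rmul_rcoset, (rcoset_eq sH).
  unfold inter, conjset. gsimpl. tauto.
Qed.

Lemma simpcos_adj_ends {G : group} {H : G -> Prop} {g : G} (sH : is_subgroup H) u v :
  simpcos_adj H g u v -> exists w, u = mkC H w /\ v = mkC H (gmul g w).
Proof.
  intros [x [y [hx [hy [h1 [h2 [hh1 [hh2 e]]]]]]]].
  exists (gmul h2 x). split; apply sig_eq; [rewrite hx|rewrite hy]; simpl; apply (rcoset_eq sH).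
  - gsimpl. now apply (sgV sH).
  - replace y with (gmul (gmul (gmul h1 g) h2) x) by (rewrite <- e; now gsimpl).
    now gsimpl.
Qed.

Lemma simpcos_adj_edge {G : group} (H : G -> Prop) (g : G) (sH : is_subgroup H) w :
  simpcos_adj H g (mkC H w) (mkC H (gmul g w)).
Proof.
  exists w, (gmul g w). split; [reflexivity | split; [reflexivity|]].
  exists gone, gone. split; [apply (sg1 sH) | split; [apply (sg1 sH) | now gsimpl]].
Qed.

Theorem theorem2p2 (G : group) (H J : G -> Prop) (g : G) (k lam : nat)
  (HH : is_subgroup H) (HJ : is_subgroup J)
  (HneG : exists x : G, ~ H x)
  (HJind : index J (inter H J) 2)
  (HHfin : exists n, index H (inter H J) n)
  (gJ : J g) (gnH : ~ H g)
  (Hk : index H (inter H (conjset H g)) k)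
  (Hlam : index (inter H (conjset H g)) (inter H J) lam) :
  let K := inter H (conjset H g) in
  let L := generated (fun x => K x \/ x = g) in
  let Gamma := Cos H J in
  (* (a) *)
  (is_graph Gamma /\ locally_finite Gamma /\ regular Gamma k lam /\
   (connected Gamma <-> forall x : G, generated (fun y => H y \/ J y) x)) /\
  (* (b) *)
  (cos_action_aut H J /\ cos_arc_transitive H J /\
   (forall x y : G, same_action H J x y <-> core (inter H J) (gmul x (ginv y))) /\
   (forall x : G, rmul H x = H <-> H x) /\
   (forall x : G, rmul J x = J <-> J x) /\
   (forall x : G, (rmul H x = H /\ rmul J x = J /\ rmul (rcoset H g) x = rcoset H g)
                  <-> inter K J x) /\
   (forall x : G, inter K J x <-> inter H J x)) /\
  (* (c) *)
  ((forall x : G, inter H L x <-> K x) /\ index L K 2 /\ index L J lam /\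
   is_graph (Cos H L) /\ locally_finite (Cos H L) /\ simple (Cos H L) /\
   graph_iso (Cos H L) (SimpCos H g)) /\
  (* (d) *)
  (graph_iso (Cos H L) (base_graph Gamma) /\
   (graph_iso Gamma (extender (Cos H L) lam) /\
    cos_arc_transitive H L /\ cos_arc_transitive H J) /\
   (simple Gamma <-> forall x : G, L x <-> J x)).
Proof.
  intros K L Gamma.
  pose proof (J_index2 HH HJ gJ gnH HJind) as hJ.
  pose proof (i2_sq hJ) as Hgg.
  pose proof (L_index2 HH Hgg gnH) as hL.
  assert (hsimpleL : simple (Cos H L)) by (apply (cos_simple_iff HH hL), (K_sub_L HH Hgg)).
  assert (hHL : inter H L = K) by (apply pred_ext, (inter_H_L HH Hgg gnH)).
  destruct HHfin as [n hn].
  split; [|split; [|split]].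
  - split; [|split; [|split]].
    + exact (cos_is_graph HH hJ).
    + exact (cos_locally_finite HH hJ n hn).
    + exact (conj (cos_valency HH hJ k Hk) (cos_multiplicity HH hJ lam Hlam)).
    + exact (cos_connected_iff HH hJ).
  - split; [exact (cos_action_is_aut HH hJ)|split; [exact (cos_arc_trans HH hJ)|]].
    split; [exact (same_action_core HH HJ)|split; [exact (rmul_subgroup HH)|]].
    split; [exact (rmul_subgroup HJ)|split; [exact (arc_stabiliser g HH HJ)|exact (inter_K_J HH HJ gJ gnH HJind)]].
  - split; [exact (inter_H_L HH Hgg gnH)|split; [exact (index_L_K HH Hgg gnH)|]].
    split; [exact (index_L_J HH HJ gJ gnH HJind lam Hlam)|split; [exact (cos_is_graph HH hL)|]].
    split; [apply (cos_locally_finite HH hL k); change (index H (inter H L) k); now rewrite hHL|split; [exact hsimpleL|]].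
    exact (cos_iso_of_simple HH hL _ (simpcos_adj_ends HH) (simpcos_adj_edge H g HH) hsimpleL).
  - split; [exact (cos_iso_of_simple HH hL _ (cos_adj_ends HH hJ) (cos_adj_edge HH hJ) hsimpleL)|].
    split; [split; [|split]|].
    + exact (cos_extender_iso HH hJ hL (J_sub_L HH HJ gJ gnH HJind) lam
               (index_L_J HH HJ gJ gnH HJind lam Hlam)).
    + exact (cos_arc_trans HH hL).
    + exact (cos_arc_trans HH hJ).
    + unfold Gamma. rewrite (cos_simple_iff HH hJ). symmetry. exact (L_eq_J_iff HH HJ gJ gnH HJind).
Qed.
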